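(* Every exceptional domestic duality of a building $\mathsf{A}_n(2)$ (the projective space $\mathsf{PG}(n,2)$, $n\geq 2$) is strongly exceptional domestic.
   Context: Types of $\mathsf{PG}(n,2)$ are $1,\ldots,n$ (type $i$: $(i-1)$-dimensional subspaces), $S=\{1,\ldots,n\}$. A duality is an automorphism with type map $i\mapsto n+1-i$; composing with opposition $i\mapsto n+1-i$ gives the identity on $S$. Simplices are opposite if every chamber containing either is opposite some chamber containing the other. For $J\subseteq S$, $\theta$ is $J$-domestic if no simplex of type $J$ is mapped to an opposite; domestic if no chamber is mapped to an opposite; exceptional domestic if domestic and every $i\in S$ lies in the type of some simplex mapped to an opposite; strongly exceptional domestic if domestic but not $J$-domestic for any proper subset $J\subsetneq S$ (for dualities of $\mathsf{A}_n$ this means: for each cotype $i$ there is a panel of cotype $i$ mapped to an opposite panel). *)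

(* The projective space PG(n,2) is modelled by the vector
   space V = F_2^(n+1) = 'rV['F_2]_(n.+1); its points/lines/... are the
   subspaces U of V with 0 < \dim U < n+1.  The "type" of such a subspace is
   its vector dimension \dim U (= projective dimension + 1), so types range
   over S = {1,...,n}.  Types are indexed by i : 'I_n, standing for type i+1. *)
From HB Require Import structures.
From mathcomp Require Import all_boot all_order all_algebra all_field.

Set Implicit Arguments.
Unset Strict Implicit.
Unset Printing Implicit Defensive.

Import GRing.Theory.
Local Open Scope ring_scope.

Section ProjectiveSpace.
Variable n : nat.

Definition pt := 'rV['F_2]_(n.+1).
Definition subsp := {vspace pt}.

Definition proper_sub (U : subsp) : bool := (0 < \dim U < n.+1)%N.

Definition incident (U W : subsp) : bool := (U <= W)%VS || (W <= U)%VS.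

Definition is_duality (th : subsp -> subsp) : Prop :=
  [/\ forall U, proper_sub U -> proper_sub (th U) /\ \dim (th U) = (n.+1 - \dim U)%N,
      forall U W, proper_sub U -> proper_sub W -> th U = th W -> U = W,
      forall W, proper_sub W -> exists2 U, proper_sub U & th U = W
    & forall U W, proper_sub U -> proper_sub W ->
        incident (th U) (th W) = incident U W].

(* a simplex (flag) is given by its type J (i in J stands for type i+1) and
   the choice of a subspace of each type in J; entries outside J are
   irrelevant *)
Definition simplex := ({set 'I_n} * ('I_n -> subsp))%type.

Definition is_simplex (A : simplex) : Prop :=
  (forall i, i \in A.1 -> \dim (A.2 i) = i.+1) /\
  (forall i j, i \in A.1 -> j \in A.1 -> (i <= j)%N -> (A.2 i <= A.2 j)%VS).

Definition chamber (C : 'I_n -> subsp) : Prop := is_simplex (setT, C).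

Definition contains (C : 'I_n -> subsp) (A : simplex) : Prop :=
  forall i, i \in A.1 -> C i = A.2 i.

(* chambers (complete flags) C, D are opposite iff C_i and D_{n+1-i} are
   complementary for all types i; since dimensions add up to n+1 this is
   C_i :&: D_{n+1-i} = 0 *)
Definition opp_chamber (C D : 'I_n -> subsp) : Prop :=
  forall i, (C i :&: D (rev_ord i) = 0)%VS.

Definition opposite (A B : simplex) : Prop :=
  (forall C, chamber C -> contains C A ->
     exists D, [/\ chamber D, contains D B & opp_chamber C D]) /\
  (forall D, chamber D -> contains D B ->
     exists C, [/\ chamber C, contains C A & opp_chamber C D]).

Definition img (th : subsp -> subsp) (A : simplex) : simplex :=
  ([set rev_ord i | i in A.1], fun i => th (A.2 (rev_ord i))).

Definition mapped_to_opposite th (A : simplex) : Prop :=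
  is_simplex A /\ opposite A (img th A).

Definition J_domestic th (J : {set 'I_n}) : Prop :=
  forall A : simplex, A.1 = J -> ~ mapped_to_opposite th A.

Definition domestic th : Prop := J_domestic th setT.

Definition exceptional_domestic th : Prop :=
  domestic th /\
  forall i : 'I_n, exists A : simplex, i \in A.1 /\ mapped_to_opposite th A.

Definition strongly_exceptional_domestic th : Prop :=
  domestic th /\ forall J : {set 'I_n}, J \proper setT -> ~ J_domestic th J.

End ProjectiveSpace.

From Pilot Require Import Defs.
From mathcomp Require Import all_boot all_order all_algebra all_field.
From mathcomp Require Import zify.

Set Implicit Arguments.
Unset Strict Implicit.
Unset Printing Implicit Defensive.

Import GRing.Theory.
Local Open Scope ring_scope.

(* Extend th to an inclusion-reversing bijection Th of the whole subspace
   lattice of V = F_2^(n+1).  A subspace U is mapped to an opposite one iff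
   U :&: Th U = 0, and a flag all of whose members have this property is
   mapped to an opposite flag.  Over F_2 the rule B(u, x) = [x 
otin Th <[u]>]
   is biadditive, because the complement of a hyperplane is a coset, and
   exceptional domesticity provides a vector v with B(v, v) = 1.  From it one
   grows a chain 0 = P_0 < ... < P_(n-1) of such subspaces with dim P_i = i:
   if no vector of Th (P + <[v]>) is non-absolute, the vectors of
   Th (P + <[v]>) orthogonal to v span a space too large to be totally
   isotropic, and a pair y, y' in it with B(y, y') = 1 lets one trade v for
   v + y.  For every type k+1 the subspaces P_(t+1) (t < k) and
   P_k + Th P_(k+n-t) (t > k) then form a flag of cotype k+1 mapped to an
   opposite flag, so th is J-domestic for no J missing k. *)

Section Subspaces.
Variables (K : fieldType) (vT : vectType K).
Implicit Types (L U X Z : {vspace vT}) (v : vT).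

Lemma dimv_full U : \dim U = \dim {:vT} -> U = fullv.
Proof. by move=> dimU; apply/eqP; rewrite eqEdim subvf dimU leqnn. Qed.

Lemma capv_line_notin v X : v \notin X -> (<[v]> :&: X = 0)%VS.
Proof.
move=> vX; apply/eqP; rewrite -subv0; apply/subvP=> _ /memv_capP[/vlineP[k ->] kvX].
have [-> | k0] := eqVneq k 0; first by rewrite scale0r mem0v.
by rewrite -[v](scalerK k0) memvZ in vX.
Qed.

Lemma dimv_add_line X v : v \notin X -> \dim (X + <[v]>) = (\dim X).+1.
Proof.
move=> vX; rewrite dimv_disjoint_sum 1?capvC ?capv_line_notin // dim_vline.
by case: eqP vX => [-> | _]; rewrite ?mem0v ?addn1.
Qed.

Lemma subv_extend_disjoint L U Z d :
    (L <= U)%VS -> (L :&: Z = 0)%VS -> (\dim L <= d)%N -> (d + \dim Z <= \dim U)%N ->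
  exists E, [/\ (L <= E)%VS, (E <= U)%VS, \dim E = d & (E :&: Z = 0)%VS].
Proof.
move=> LU LZ /subnKC <-; move: (d - \dim L)%N => k.
elim: k L LU LZ => [|k IHk] L LU LZ dimU.
  by exists L; rewrite addn0.
have dimLZ : \dim (L + Z) = (\dim L + \dim Z)%N by rewrite dimv_disjoint_sum.
have /subvPn[u uU uLZ] : ~~ (U <= L + Z)%VS.
  by apply: contraTN dimU => /dimvS; rewrite dimLZ; lia.
have uL : u \notin L by apply: contra uLZ; apply: subvP; apply: addvSl.
have LuZ : ((L + <[u]>) :&: Z = 0)%VS.
  apply/eqP; rewrite -dimv_eq0 -(eqn_add2l (\dim (L + <[u]> + Z))) dimv_sum_cap.
  by rewrite -addvA (addvC <[u]>%VS) addvA !dimv_add_line // dimLZ; lia.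
have LuU : (L + <[u]> <= U)%VS by rewrite subv_add LU -memvE.
have [|E [LuE EU dimE EZ]] := IHk _ LuU LuZ; first by rewrite dimv_add_line //; lia.
exists E; split=> //; last by rewrite dimE dimv_add_line // addSnnS.
exact: subv_trans (addvSl _ _) LuE.
Qed.

End Subspaces.

Section BinarySpace.
Variable vT : vectType 'F_2.

Lemma F2_eq1 (k : 'F_2) : k != 0 -> k = 1.
Proof. by case: k => [[|[|]]] //= ? _; apply: val_inj. Qed.

Lemma addvv_F2 (a : vT) : a + a = 0.
Proof. by rewrite -mulr2n -(scaler_nat (R := 'F_2)) (@pchar_Fp_0 2) ?scale0r. Qed.

Lemma notin_addv_hyperplane (H : {vspace vT}) a b :
    (\dim {:vT} <= (\dim H).+1)%N ->
  (a + b \notin H) = (a \notin H) (+) (b \notin H).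
Proof.
move=> dimH; have [aH | aH] := boolP (a \in H); first by rewrite rpredDl.
have [bH | bH] := boolP (b \in H); first by rewrite rpredDr.
have /memv_addP[h hH [_ /vlineP[k ->] eb]] : b \in (H + <[a]>)%VS.
  suff -> : (H + <[a]>)%VS = fullv by rewrite memvf.
  by apply/dimv_full/eqP; rewrite eqn_leq dimvS ?subvf //= dimv_add_line.
rewrite eb in bH *.
have /F2_eq1 k1 : k != 0 by apply: contraNneq bH => ->; rewrite scale0r addr0.
by rewrite k1 scale1r addrCA addvv_F2 addr0 hH.
Qed.

End BinarySpace.

Definition correlation (K : fieldType) (vT : vectType K)
    (Th : {vspace vT} -> {vspace vT}) : Prop :=
  [/\ forall U W, (Th U <= Th W)%VS = (W <= U)%VS,
      forall U, \dim (Th U) = (\dim {:vT} - \dim U)%N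
    & forall W, exists U, Th U = W].

Section Correlation.
Variables (K : fieldType) (vT : vectType K) (Th : {vspace vT} -> {vspace vT}).
Hypothesis ThC : correlation Th.
Implicit Types (A B U W X Z : {vspace vT}) (P : nat -> {vspace vT}).
Local Notation N := (\dim {:vT}).

Lemma Th_leE U W : (Th U <= Th W)%VS = (W <= U)%VS. Proof. by case: ThC. Qed.

Lemma dim_Th U : \dim (Th U) = (N - \dim U)%N. Proof. by case: ThC. Qed.

Lemma Th_surj W : exists U, Th U = W. Proof. by case: ThC. Qed.

Lemma Th0 : Th 0 = fullv.
Proof. by apply: dimv_full; rewrite dim_Th dimv0 subn0. Qed.

Lemma Thf : Th fullv = 0%VS.
Proof. by apply/eqP; rewrite -dimv_eq0 dim_Th subnn. Qed.

Lemma Th_add U W : Th (U + W) = (Th U :&: Th W)%VS.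
Proof.
have [X ThX] := Th_surj (Th U :&: Th W)%VS.
apply/eqP; rewrite eqEsubv subv_cap !Th_leE addvSl addvSr -ThX Th_leE subv_add.
by rewrite -!(Th_leE X) ThX capvSl capvSr.
Qed.

(* U is mapped to a complementary, i.e. opposite, subspace. *)
Definition nondeg U := (U :&: Th U = 0)%VS.

Lemma addv_Th_nondeg U : nondeg U -> (U + Th U)%VS = fullv.
Proof.
by move=> ndU; apply: dimv_full; rewrite dimv_disjoint_sum // dim_Th subnKC ?dimvS ?subvf.
Qed.

Lemma nondeg_Th U : nondeg U -> nondeg (Th U).
Proof. by move=> ndU; rewrite /nondeg -Th_add addv_Th_nondeg ?Thf. Qed.

Lemma nondeg_addv_Th A B : nondeg A -> nondeg B -> (A <= B)%VS -> nondeg (A + Th B).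
Proof.
move=> ndA ndB AB; rewrite /nondeg Th_add capvA (addvC A) -vspace_modl ?Th_leE //.
by rewrite ndA addv0; apply: nondeg_Th.
Qed.

Lemma dim_addv_Th A B : nondeg B -> (A <= B)%VS ->
  \dim (A + Th B) = (\dim A + (N - \dim B))%N.
Proof.
move=> ndB AB; rewrite dimv_disjoint_sum ?dim_Th //.
by apply/eqP; rewrite -subv0 -ndB capvS.
Qed.

Lemma dim_isotropic X Z : nondeg X -> (Z <= Th X)%VS -> (Z <= Th Z)%VS ->
  (\dim Z * 2 + \dim X <= N)%N.
Proof.
move=> ndX ZX ZZ; have dZX : \dim (Z + X) = (\dim Z + \dim X)%N.
  by rewrite dimv_disjoint_sum //; apply/eqP; rewrite -subv0 -ndX capvC capvS.
have := dimvS (subvf (Z + X)); have : (Z <= Th (Z + X))%VS by rewrite Th_add subv_cap ZZ.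
by move/dimvS; rewrite dim_Th dZX; lia.
Qed.

Definition nondeg_chain (P : nat -> {vspace vT}) (m : nat) : Prop :=
  {homo P : i j / (i <= j)%N >-> (i <= j)%VS} /\
  forall i, (i <= m)%N -> nondeg (P i) /\ \dim (P i) = i.

(* The member of type t+1 of a flag of cotype k+1; above k its dimension is
   k + (N - (k + N - 1 - t)) = t + 1. *)
Definition skip_flag (P : nat -> {vspace vT}) (k t : nat) : {vspace vT} :=
  if (t < k)%N then P t.+1 else (P k + Th (P (k + N.-1 - t)%N))%VS.

Lemma skip_flag_homo P k : {homo P : i j / (i <= j)%N >-> (i <= j)%VS} ->
  {homo skip_flag P k : t t' / (t <= t')%N >-> (t <= t')%VS}.
Proof.
move=> Phomo t t' tt'; rewrite /skip_flag.
case: ltnP => tk; case: ltnP => t'k.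
- exact: Phomo.
- exact: subv_trans (Phomo _ _ tk) (addvSl _ _).
- by move: (leq_ltn_trans tt' t'k); rewrite ltnNge tk.
- by rewrite addvS ?Th_leE ?Phomo ?leq_sub2l.
Qed.

Lemma skip_flag_nondeg P k t : nondeg_chain P N.-2 -> t != k -> (t < N.-1)%N ->
  (k < N.-1)%N -> nondeg (skip_flag P k t) /\ \dim (skip_flag P k t) = t.+1.
Proof.
move=> [Phomo Pnd] tk tN kN; rewrite /skip_flag; case: ltnP => [tk' | kt].
  by apply: Pnd; lia.
have kl : (k <= k + N.-1 - t)%N by lia.
have [ndPk dimPk] : nondeg (P k) /\ \dim (P k) = k by apply: Pnd; lia.
have [ndPl dimPl] : nondeg (P (k + N.-1 - t)%N) /\ \dim (P (k + N.-1 - t)%N) = (k + N.-1 - t)%N.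
  by apply: Pnd; lia.
split; first exact: nondeg_addv_Th ndPk ndPl (Phomo _ _ kl).
by rewrite dim_addv_Th ?Phomo // dimPk dimPl; lia.
Qed.

End Correlation.

Section BinaryCorrelation.
Variables (vT : vectType 'F_2) (Th : {vspace vT} -> {vspace vT}).
Hypothesis ThC : correlation Th.
Implicit Types (P : nat -> {vspace vT}) (A S X Z : {vspace vT}) (u v w x y : vT).
Local Notation N := (\dim {:vT}).
Local Notation nondeg := (nondeg Th).

(* B(u, x) = 1 for the bilinear form B with Th U = {x | B(U, x) = 0}. *)
Definition form u x : bool := x \notin Th <[u]>.

Lemma form_Th_line S x u : Th S = <[x]>%VS -> form u x = (u \notin S).
Proof. by move=> ThS; rewrite /form !memvE -ThS (Th_leE ThC). Qed.

Lemma notin_Th_form Z x : x \notin Th Z -> exists2 u, u \in Z & form u x.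
Proof.
have [S ThS] := Th_surj ThC <[x]>%VS.
rewrite memvE -ThS (Th_leE ThC) => /subvPn[u uZ uS].
by exists u; rewrite ?(form_Th_line _ ThS).
Qed.

Lemma formDr u x y : form u (x + y) = form u x (+) form u y.
Proof.
rewrite /form notin_addv_hyperplane // dim_Th // dim_vline.
by case: (u != 0); rewrite ?subn0 ?subn1 ?leqSpred.
Qed.

Lemma formDl u w x : form (u + w) x = form u x (+) form w x.
Proof.
have [S ThS] := Th_surj ThC <[x]>%VS.
rewrite !(form_Th_line _ ThS) notin_addv_hyperplane //.
have := dim_Th ThC S; have := dimvS (subvf S); rewrite ThS dim_vline.
by case: (x != 0); lia.
Qed.

Lemma nondeg_add_nonabsolute A v : nondeg A -> v \in Th A -> form v v ->
  nondeg (A + <[v]>) /\ \dim (A + <[v]>) = (\dim A).+1.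
Proof.
move=> ndA vA vv; have vnA : v \notin A.
  apply: contraL vv => vA'; have : v \in (A :&: Th A)%VS by rewrite memv_cap vA' vA.
  by rewrite ndA memv0 => /eqP->; rewrite /form mem0v.
split; last exact: dimv_add_line.
rewrite /nondeg (Th_add ThC) capvA addvC -vspace_modl -?memvE // ndA addv0.
exact: capv_line_notin.
Qed.

Lemma perp_nonisotropic_pair A v : nondeg A -> (\dim A + 4 <= N)%N -> v \in Th A -> form v v ->
  exists y y', [/\ y \in Th (A + <[v]>), y' \in Th (A + <[v]>),
                    form y v = false, form y' v = false & form y y'].
Proof.
move=> ndA dimA vA vv; have [ndX dimX] := nondeg_add_nonabsolute ndA vA vv.
have v0 : v != 0 by apply: contraTneq vv => ->; rewrite /form mem0v.
have [S ThS] := Th_surj ThC <[v]>%VS.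
pose Z := (Th (A + <[v]>) :&: S)%VS.
(* Z <= Th Z would make Z totally isotropic, which its dimension forbids. *)
have /subvPn[y' y'Z y'ThZ] : ~~ (Z <= Th Z)%VS.
  apply/negP => /(dim_isotropic ThC ndX (capvSl _ _)).
  have := dimv_sum_cap (Th (A + <[v]>)) S; have := dimvS (subvf (Th (A + <[v]>) + S)).
  have := dim_Th ThC S; have := dimvS (subvf S).
  by rewrite ThS dim_vline v0 (dim_Th ThC (A + _)) dimX; lia.
have [y /memv_capP[yX yS] yy'] := notin_Th_form y'ThZ.
case/memv_capP: y'Z => y'X y'S.
by exists y, y'; rewrite !(form_Th_line _ ThS) yS y'S.
Qed.

Lemma nonabsolute_step A v : nondeg A -> (\dim A + 4 <= N)%N -> v \in Th A -> form v v ->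
  exists v', [/\ v' \in Th A, form v' v' & exists2 w, w \in Th (A + <[v']>) & form w w].
Proof.
move=> ndA dimA vA vv.
have [y [y' [yX y'X yv y'v yy']]] := perp_nonisotropic_pair ndA dimA vA vv.
have perpE z : z \in Th (A + <[v]>) -> z \in Th A /\ form v z = false.
  by rewrite (Th_add ThC) memv_cap /form => /andP[zA zv]; rewrite zA zv.
have [[yA vy] [y'A vy']] := (perpE y yX, perpE y' y'X).
(* If y or y' is non-absolute v itself will do; otherwise v + y and v + y' do. *)
have [yy | /negbTE yy] := boolP (form y y); first by exists v; split=> //; exists y.
have [y'y' | /negbTE y'y'] := boolP (form y' y'); first by exists v; split=> //; exists y'.
exists (v + y); split; first exact: rpredD.
  by rewrite formDl !formDr vv vy yv yy.
exists (v + y'); last by rewrite formDl !formDr vv vy' y'v y'y'.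
rewrite (Th_add ThC) memv_cap rpredD //=; apply/negPn.
by change (~~ form (v + y) (v + y')); rewrite formDl !formDr vv vy' yv yy'.
Qed.

Lemma nondeg_chain_extend P m v : nondeg_chain Th P m -> v \in Th (P m) -> form v v ->
  nondeg_chain Th (fun i => if (i <= m)%N then P i else (P m + <[v]>)%VS) m.+1.
Proof.
move=> [Phomo Pnd] vP vv; have [ndPm dimPm] := Pnd m (leqnn m).
have [ndQ dimQ] := nondeg_add_nonabsolute ndPm vP vv.
split=> [i j ij | i im1].
  case: ifP => im; case: ifP => jm; [exact: Phomo | | | exact: subvv].
  - exact: subv_trans (Phomo _ _ im) (addvSl _ _).
  - by rewrite (leq_trans ij jm) in im.
case: ifP => im; first exact: Pnd.
by rewrite dimQ dimPm; split=> //; lia.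
Qed.

Lemma nonabsolute_chain v0 m : (m.+2 < N)%N -> form v0 v0 ->
  exists P, nondeg_chain Th P m /\ exists2 v, v \in Th (P m) & form v v.
Proof.
move=> mN vv0; elim: m mN => [|m IHm] mN.
  exists (fun=> 0%VS); split; last by exists v0; rewrite ?(Th0 ThC) ?memvf.
  split=> [i j _ | i]; first exact: subvv.
  by rewrite leqn0 => /eqP->; split; [exact: cap0v | exact: dimv0].
have [P [chP [v vP vv]]] := IHm (ltnW mN).
have [ndPm dimPm] := chP.2 m (leqnn m).
have [|v' [v'P v'v' [w wP ww]]] := nonabsolute_step ndPm _ vP vv.
  by rewrite dimPm; lia.
exists (fun i => if (i <= m)%N then P i else (P m + <[v']>)%VS).
by split; [apply: nondeg_chain_extend | exists w; rewrite ?ltnn].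
Qed.

Lemma exists_nondeg_chain v0 : (2 < N)%N -> form v0 v0 ->
  exists P, nondeg_chain Th P N.-2.
Proof.
move=> N2 vv0; have [|P [chP [v vP vv]]] := nonabsolute_chain (m := N - 3) _ vv0.
  by lia.
have -> : N.-2 = (N - 3).+1 by lia.
by eexists; apply: nondeg_chain_extend chP vP vv.
Qed.

End BinaryCorrelation.

Section Flags.
Variable n : nat.
Implicit Types (C D : 'I_n -> subsp n) (K : {set 'I_n}) (B : 'I_n -> subsp n) (A : simplex n).

Lemma dim_pt : \dim {:pt n} = n.+1.
Proof. by rewrite dimvf /dim /= mul1n. Qed.

Lemma leq_rev_ord (i j : 'I_n) : (rev_ord i <= rev_ord j)%N = (j <= i)%N.
Proof. by rewrite /=; have := ltn_ord i; have := ltn_ord j; lia. Qed.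

Lemma proper_simplex A i : is_simplex A -> i \in A.1 -> Defs.proper_sub (A.2 i).
Proof. by case=> dimA _ iA; rewrite /Defs.proper_sub dimA //= ltnS; apply: ltn_ord. Qed.

(* Consecutive members may coincide, so the zero family qualifies. *)
Definition weak_chamber C : Prop :=
  [/\ forall i j : 'I_n, (i <= j)%N -> (C i <= C j)%VS,
      forall i : 'I_n, (\dim (C i) <= i.+1)%N
    & forall i j : 'I_n, j = i.+1 :> nat -> (\dim (C j) <= (\dim (C i)).+1)%N].

Lemma chamber_weak C : chamber C -> weak_chamber C.
Proof.
by case=> /= dimC Cmono; split=> [i j ij | i | i j ji]; rewrite ?Cmono ?dimC ?inE ?ji.
Qed.

Lemma weak_chamber0 : weak_chamber (fun=> 0%VS).
Proof. by split=> *; rewrite ?subvv ?dimv0. Qed.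

Definition opp_on C A : Prop :=
  forall j, j \in A.1 -> (A.2 j :&: C (rev_ord j) = 0)%VS.

Lemma opp_chamberC C D : opp_chamber C D -> opp_chamber D C.
Proof. by move=> CD i; rewrite capvC -{2}(rev_ordK i). Qed.

Section FillGap.
Variables (C : 'I_n -> subsp n) (K : {set 'I_n}) (B : 'I_n -> subsp n) (j : 'I_n).
Hypotheses (Cw : weak_chamber C) (Bs : is_simplex (K, B)) (oppB : opp_on C (K, B)).

Lemma opp_upper_bound : (forall i : 'I_n, (j < i)%N -> i \in K) ->
  exists U, [/\ \dim U = j.+2, (\dim (U :&: C (rev_ord j)) <= 1)%N,
             forall i, i \in K -> (i < j)%N -> (B i <= U)%VS
           & forall i, i \in K -> (j < i)%N -> (U <= B i)%VS].
Proof.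
case: Cw Bs => Cmono dimC dimCS [/= dimB Bmono] above.
have [jn | nj] := ltnP j.+1 n; last first.
  exists fullv; split=> [||i _ _ | i _ ji]; rewrite ?subvf ?dim_pt ?capfv //.
  - by have := ltn_ord j; lia.
  - by apply: leq_trans (dimC _) _; rewrite /=; lia.
  - by have := ltn_ord i; lia.
pose j1 := Ordinal jn; have j1K : j1 \in K by apply: above; rewrite /= ltnSn.
exists (B j1); split=> [||i iK ij | i iK ji]; rewrite ?dimB //; last first.
- exact: Bmono.
- by apply: Bmono => //=; lia.
have revj : rev_ord j = (rev_ord j1).+1 :> nat by rewrite /=; lia.
have disj : (B j1 :&: C (rev_ord j) :&: C (rev_ord j1) = 0)%VS.
  by apply/eqP; rewrite -subv0 -(oppB j1K) capvS ?capvSl.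
have sub : (B j1 :&: C (rev_ord j) + C (rev_ord j1) <= C (rev_ord j))%VS.
  by rewrite subv_add capvSr Cmono // leq_rev_ord leqnSn.
by have := dimCS _ _ revj; move: (dimvS sub); rewrite dimv_disjoint_sum //; lia.
Qed.

Lemma opp_lower_bound :
  exists L, [/\ (\dim L <= j)%N, (L :&: C (rev_ord j) = 0)%VS,
             forall i, i \in K -> (i < j)%N -> (B i <= L)%VS
           & forall W, (forall i, i \in K -> (i < j)%N -> (B i <= W)%VS) -> (L <= W)%VS].
Proof.
case: Cw Bs => Cmono _ _ [/= dimB Bmono].
pose below i := (i \in K) && (i < j)%N.
have [a0 a0K | noK] := pickP below; last first.
  exists 0%VS; split=> [|||W _]; rewrite ?dimv0 ?cap0v ?sub0v //.
  by move=> i iK ij; have := noK i; rewrite /below iK ij.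
case: (@arg_maxnP _ a0 below (fun i => i : nat) a0K) => a /andP[aK aj] amax.
exists (B a); split=> [|||W]; first by rewrite dimB.
- by apply/eqP; rewrite -subv0 -(oppB aK) capvS // Cmono // leq_rev_ord ltnW.
- by move=> i iK ij; apply: Bmono => //; apply: amax; rewrite /below iK ij.
- by apply.
Qed.

Lemma opp_fill_gap : (forall i : 'I_n, (j < i)%N -> i \in K) ->
  exists E, [/\ \dim E = j.+1, (E :&: C (rev_ord j) = 0)%VS,
             forall i, i \in K -> (i < j)%N -> (B i <= E)%VS
           & forall i, i \in K -> (j < i)%N -> (E <= B i)%VS].
Proof.
move=> above; have [U [dimU dimUC BU UB]] := opp_upper_bound above.
have [L [dimL LC BL Lmin]] := opp_lower_bound.
have [|||E [LE EU dimE EUC]] :=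
  subv_extend_disjoint (Z := U :&: C (rev_ord j)) (d := j.+1) (Lmin _ BU).
- by apply/eqP; rewrite -subv0 -LC capvS ?capvSr.
- exact: leqW.
- by rewrite dimU; lia.
exists E; split=> // [|i iK ij | i iK ji].
- by rewrite -EUC capvA (capv_idPl EU).
- exact: subv_trans (BL i iK ij) LE.
- exact: subv_trans EU (UB i iK ji).
Qed.

End FillGap.

Lemma is_simplex_insert K B (j : 'I_n) E :
    is_simplex (K, B) -> \dim E = j.+1 ->
    (forall i, i \in K -> (i < j)%N -> (B i <= E)%VS) ->
    (forall i, i \in K -> (j < i)%N -> (E <= B i)%VS) ->
  is_simplex (j |: K, (fun i => if i == j then E else B i)).
Proof.
move=> [/= dimB Bmono] dimE BE EB; split=> /= [i | i i'].
  by rewrite in_setU1; case: eqVneq => [-> | _ /dimB].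
rewrite !in_setU1; case: (eqVneq i j) => [-> | ij]; case: (eqVneq i' j) => [-> | i'j] //=.
- by move=> _ i'K ji'; apply: EB; rewrite // ltn_neqAle val_eqE eq_sym i'j.
- by move=> iK _ ij'; apply: BE; rewrite // ltn_neqAle val_eqE ij.
- exact: Bmono.
Qed.

Lemma opp_chamber_ext C A : weak_chamber C -> is_simplex A -> opp_on C A ->
  exists D, [/\ chamber D, contains D A & opp_chamber D C].
Proof.
move=> Cw; case: A => K B; move Hm: #|~: K| => m.
elim: m K B Hm => [|m IHm] K B Hm Bs oppB.
  have KT : K = setT.
    by apply/setP=> i; rewrite inE; apply: contraT => iK; move: Hm; rewrite (cardsD1 i) inE iK.
  by subst K; exists B; split=> // i; apply: oppB; rewrite inE.
have [j0 j0K] : exists j0, j0 \in ~: K by apply/card_gt0P; rewrite Hm.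
rewrite inE in j0K.
case: (@arg_maxnP _ j0 (fun i => i \notin K) (fun i => i : nat) j0K) => j jK jmax.
have above (i : 'I_n) : (j < i)%N -> i \in K.
  by apply: contraTT => iK; rewrite -leqNgt; apply: jmax.
have [E [dimE EC BE EB]] := opp_fill_gap Cw Bs oppB above.
have [|||D [Dch DB DC]] := IHm (j |: K) (fun i => if i == j then E else B i).
- have := cardsD1 j (~: K); rewrite Hm inE jK add1n => -[->].
  by apply: eq_card => i; rewrite !inE negb_or.
- exact: is_simplex_insert.
- by move=> i; rewrite /= in_setU1; case: eqVneq => [-> _ | _ /= iK]; [exact: EC | exact: oppB].
exists D; split=> // i iK; rewrite DB /= ?in_setU1 ?iK ?orbT //.
by case: eqVneq => // eij; move: jK; rewrite -eij iK.
Qed.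

Lemma exists_chamber A : is_simplex A -> exists D, chamber D /\ contains D A.
Proof.
move=> As; have [|D [Dch DA _]] := opp_chamber_ext weak_chamber0 As.
  by move=> j _; rewrite capv0.
by exists D.
Qed.

Lemma opposite_cap0 A A' (i : 'I_n) : is_simplex A -> opposite A A' ->
  i \in A.1 -> rev_ord i \in A'.1 -> (A.2 i :&: A'.2 (rev_ord i) = 0)%VS.
Proof.
move=> As [AA' _] iA iA'; have [C [Cch CA]] := exists_chamber As.
have [D [_ DA' CD]] := AA' C Cch CA.
by have := CD i; rewrite CA // DA'.
Qed.

End Flags.

Section Duality.
Variables (n : nat) (th : subsp n -> subsp n).
Hypothesis thD : is_duality th.
Implicit Types (U W : subsp n) (A : simplex n).

Definition Th U : subsp n := if U == 0%VS then fullv else if U == fullv then 0%VS else th U.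

Lemma proper_subE U : Defs.proper_sub U = (U != 0%VS) && (U != fullv).
Proof. by rewrite /Defs.proper_sub -dimv_eq0 lt0n eqEdim subvf dim_pt ltnNge. Qed.

Lemma Th_proper U : Defs.proper_sub U -> Th U = th U.
Proof. by rewrite proper_subE /Th => /andP[/negbTE-> /negbTE->]. Qed.

Lemma dim_Th_duality U : \dim (Th U) = (n.+1 - \dim U)%N.
Proof.
case: thD => thP _ _ _; rewrite /Th.
have [-> | U0] := eqVneq U 0%VS; first by rewrite dim_pt dimv0.
have [-> | Uf] := eqVneq U fullv; first by rewrite dim_pt dimv0 subnn.
by have [|_ ->] := thP U; rewrite // proper_subE U0.
Qed.

Lemma incident_Th U W : incident (Th U) (Th W) = incident U W.
Proof.
pose degenerate (X : subsp n) := (X == 0%VS) || (X == fullv).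
have incident_degenerate (X Y : subsp n) : degenerate X -> incident X Y && incident Y X.
  by case/orP=> /eqP->; rewrite /incident ?sub0v ?subvf ?orbT.
have Th_degenerate (X : subsp n) : degenerate X -> degenerate (Th X).
  by rewrite /degenerate /Th; case: ifP => [_ _ | _ /= /eqP->]; rewrite ?eqxx ?orbT.
have [Ut | Up] := boolP (degenerate U).
  have /andP[-> _] := incident_degenerate _ (Th W) (Th_degenerate _ Ut).
  by have /andP[-> _] := incident_degenerate _ W Ut.
have [Wt | Wp] := boolP (degenerate W).
  have /andP[_ ->] := incident_degenerate _ (Th U) (Th_degenerate _ Wt).
  by have /andP[_ ->] := incident_degenerate _ U Wt.
have [pU pW] : Defs.proper_sub U /\ Defs.proper_sub W by rewrite !proper_subE -!negb_or.
by rewrite !Th_proper //; case: thD => _ _ _ ->.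
Qed.

Lemma subv_incident U W : (U <= W)%VS = incident U W && (\dim U <= \dim W)%N.
Proof.
apply/idP/andP => [UW | [/orP[// | WU] dUW]]; first by rewrite /incident UW dimvS.
by have /eqP-> : W == U by rewrite eqEdim WU.
Qed.

Lemma Th_correlation : correlation Th.
Proof.
split=> [U W | U | W]; last 2 first.
- by rewrite dim_Th_duality dim_pt.
- have [-> | W0] := eqVneq W 0%VS.
    by exists fullv; apply/eqP; rewrite -dimv_eq0 dim_Th_duality dim_pt subnn.
  have [-> | Wf] := eqVneq W fullv; first by exists 0%VS; rewrite /Th eqxx.
  case: thD => _ _ thS _; have [|U pU <-] := thS W; first by rewrite proper_subE W0.
  by exists U; rewrite Th_proper.
rewrite !subv_incident incident_Th /incident orbC !dim_Th_duality; congr (_ && _).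
have := dimvS (subvf U); have := dimvS (subvf W); rewrite dim_pt.
by move=> dW dU; apply/idP/idP; lia.
Qed.

Lemma is_simplex_img A : is_simplex A -> is_simplex (img th A).
Proof.
move=> As; case: (As) => dimA Amono.
split=> /= [_ /imsetP[i iA ->] | _ _ /imsetP[i iA ->] /imsetP[i' i'A ->]].
  rewrite rev_ordK -Th_proper ?(proper_simplex As) // dim_Th_duality dimA //=.
  by have := ltn_ord i; lia.
rewrite !rev_ordK leq_rev_ord -!Th_proper ?(proper_simplex As) // => i'i.
by rewrite (Th_leE Th_correlation) Amono.
Qed.

Lemma mapped_to_opposite_nondeg A : is_simplex A ->
  (forall i, i \in A.1 -> nondeg Th (A.2 i)) -> mapped_to_opposite th A.
Proof.
move=> As ndA; split=> //; split=> [C Cch CA | D Dch DA].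
  have [|D [Dch DA CD]] := opp_chamber_ext (chamber_weak Cch) (is_simplex_img As).
    move=> _ /imsetP[i iA ->]; rewrite /= rev_ordK CA // capvC.
    by rewrite -Th_proper ?(proper_simplex As) //; apply: ndA.
  by exists D; split=> //; apply: opp_chamberC.
have [|C [Cch CA CD]] := opp_chamber_ext (chamber_weak Dch) As.
  move=> i iA; rewrite DA /= ?rev_ordK ?imset_f // -Th_proper ?(proper_simplex As) //.
  exact: ndA.
by exists C.
Qed.

Lemma nonabsolute_of_mapped_point A (i : 'I_n) : i \in A.1 -> i = 0%N :> nat ->
  mapped_to_opposite th A -> exists v, form Th v v.
Proof.
move=> iA i0 [As oppA].
have := opposite_cap0 As oppA iA (imset_f _ iA); rewrite /= rev_ordK => Ai0.
have dimAi : \dim (A.2 i) = 1%N by case: As => dimA _; rewrite dimA // i0.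
have w0 : vpick (A.2 i) != 0 by rewrite vpick0 -dimv_eq0 dimAi.
have Aiw : A.2 i = <[vpick (A.2 i)]>%VS.
  by apply/eqP; rewrite eq_sym eqEdim -memvE memv_pick dim_vline w0 dimAi.
exists (vpick (A.2 i)); rewrite /form -Aiw Th_proper ?(proper_simplex As) //.
apply/negP => wth; have : vpick (A.2 i) \in (A.2 i :&: th (A.2 i))%VS.
  by rewrite memv_cap memv_pick.
by rewrite Ai0 memv0 (negbTE w0).
Qed.

End Duality.

Theorem theorem3p11 (n : nat) (hn : (2 <= n)%N) (th : subsp n -> subsp n) :
  is_duality th -> exceptional_domestic th -> strongly_exceptional_domestic th.
Proof.
move=> thD [dom exc]; split=> // J /properP[_ [k _ kJ]] domJ.
have ThC := Th_correlation thD.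
have [A [A0 oppA]] := exc (Ordinal (ltnW hn)).
have [v vv] := nonabsolute_of_mapped_point A0 erefl oppA.
have [|P chainP] := exists_nondeg_chain ThC _ vv; first by rewrite dim_pt.
rewrite dim_pt in chainP; pose F (t : 'I_n) := skip_flag (Th th) P k t.
have Fnd t : t \in J -> nondeg (Th th) (F t) /\ \dim (F t) = t.+1.
  move=> tJ; apply: skip_flag_nondeg; rewrite ?dim_pt //=.
  by apply: contraNneq kJ => /val_inj <-.
have FJ : mapped_to_opposite th (J, F).
  apply: (mapped_to_opposite_nondeg thD) => [|t /Fnd[] //].
  split=> /= [t tJ | t t' _ _]; first by case: (Fnd t tJ).
  exact: skip_flag_homo chainP.1 t t'.
exact: (domJ (J, F) erefl FJ).
Qed.
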